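(* Let $E$, $P$, $C$ be sets and let $\mathsf{upd}_E : E \to E$ (environment), $\mathsf{upd}_P : P \times E \times C \to P$ (plant) and $\mathsf{upd}_C : C \times P \to C$ (controller) be functions. Let $S = E \times P \times C$ be the state space of the full system with dynamics $$\mathsf{upd}_S(e,p,c) = \big(\mathsf{upd}_E(e),\ \mathsf{upd}_P(p,e,c),\ \mathsf{upd}_C(c,p)\big).$$ Let $\tilde K \subseteq E \times P$ be a set of target states and $K = \{(e,p,c) \in S \mid (e,p) \in \tilde K\}$. Assume: (i) (Regulation condition) there is a subset $S^* \subseteq K$ which is forward invariant ($\mathsf{upd}_S(S^* ) \subseteq S^*$) and attracting: for every $s \in S$ there is $n \in \mathbb{N}$ such that $\mathsf{upd}_S^t(s) \in S^*$ for all $t \ge n$. (ii) (Autonomous attracting controller) Let $C^* = \{c \in C \mid \exists e,p,\ (e,p,c) \in S^*\}$ and $P^* = \{p \in P \mid \exists e,c,\ (e,p,c) \in S^*\}$. There is a function $g : C^* \to C^*$ such that $\mathsf{upd}_C(c,p) = g(c)$ for all $c \in C^*$, $p \in P^*$ (i.e. there is an autonomous system $\mathsf{C}^*_{\mathsf{aut}}$ with state set $C^*$ and update $g$, and the identity on states together with the trivial map on inputs is a map of systems from the restricted controller $\mathsf{upd}_C|_{C^* \times P^*}$ to $\mathsf{C}^*_{\mathsf{aut}}$). Then the autonomous system $\mathsf{C}^*_{\mathsf{aut}}$ (state set $C^*$, update $g$) models the attracting full system $\mathsf{S}^*$ (state set $S^*$, update $\mathsf{upd}_S|_{S^*}$)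 via the projection $\pi : S^* \to C^*$, $(e,p,c) \mapsto c$; that is, $\pi$ is surjective and $\pi(\mathsf{upd}_S(s)) = g(\pi(s))$ for all $s \in S^*$.
   Context: A (fully observable) system with state set $X$ and input set $I$ is a function $\mathsf{upd}: X \times I \to X$; it is autonomous if $I$ is a singleton. A map of systems from $(X, I, \mathsf{upd}_X)$ to $(X', I', \mathsf{upd}_{X'})$ consists of $f_s : X \to X'$ and $f_i : X \times I \to I'$ with $f_s(\mathsf{upd}_X(x,i)) = \mathsf{upd}_{X'}(f_s(x), f_i(x,i))$ for all $x,i$. A model of a system $\mathsf{X}$ by a system $\mathsf{M}$ is a map of systems $\mu:\mathsf{X}\to\mathsf{M}$ whose state part is surjective and whose input part $\mu_i(x,-)$ is surjective for each $x$. For autonomous systems this amounts to a surjection $\mu_s: X \to M$ with $\mu_s \circ \mathsf{upd}_X = \mathsf{upd}_M \circ \mu_s$. *)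

Definition updS {E P C : Type} (updE : E -> E) (updP : P -> E -> C -> P)
  (updC : C -> P -> C) (s : E * P * C) : E * P * C :=
  match s with
  | (e, p, c) => (updE e, updP p e c, updC c p)
  end.

Fixpoint iter {X : Type} (f : X -> X) (t : nat) (x : X) : X :=
  match t with
  | O => x
  | S t' => f (iter f t' x)
  end.

Definition Cstar {E P C : Type} (Sstar : E * P * C -> Prop) (c : C) : Prop :=
  exists e p, Sstar (e, p, c).
Definition Pstar {E P C : Type} (Sstar : E * P * C -> Prop) (p : P) : Prop :=
  exists e c, Sstar (e, p, c).

Definition proj_C {E P C : Type} (Sstar : E * P * C -> Prop)
  (s : {s : E * P * C | Sstar s}) : {c : C | Cstar Sstar c} :=
  match s with
  | exist _ (e, p, c) hs => exist _ c (ex_intro _ e (ex_intro _ p hs))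
  end.

From Stdlib Require Import ProofIrrelevance.

Section ControllerProjection.

Variables (E P C : Type).
Variables (updE : E -> E) (updP : P -> E -> C -> P) (updC : C -> P -> C).
Variable Sstar : E * P * C -> Prop.

Lemma proj_C_surjective (c : {c : C | Cstar Sstar c}) :
  exists s : {s : E * P * C | Sstar s}, proj_C Sstar s = c.
Proof.
  destruct c as [c hc]; destruct hc as [e [p hs]].
  exists (exist _ (e, p, c) hs); reflexivity.
Qed.

Lemma proj1_sig_proj_C (s : E * P * C) (hs : Sstar s) :
  proj1_sig (proj_C Sstar (exist _ s hs)) = snd s.
Proof. destruct s as [[e p] c]; reflexivity. Qed.

Lemma Pstar_of_Sstar (e : E) (p : P) (c : C) : Sstar (e, p, c) -> Pstar Sstar p.
Proof. intros hs; exists e, c; exact hs. Qed.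

Variable g : {c : C | Cstar Sstar c} -> {c : C | Cstar Sstar c}.
Hypothesis updC_autonomous : forall (c : C) (hc : Cstar Sstar c) (p : P),
  Pstar Sstar p -> updC c p = proj1_sig (g (exist _ c hc)).

Lemma proj_C_updS (s : E * P * C) (hs : Sstar s)
    (hs' : Sstar (updS updE updP updC s)) :
  proj_C Sstar (exist _ (updS updE updP updC s) hs') =
  g (proj_C Sstar (exist _ s hs)).
Proof.
  apply eq_sig_hprop; [intros; apply proof_irrelevance |].
  rewrite proj1_sig_proj_C.
  destruct s as [[e p] c].
  exact (updC_autonomous c (ex_intro _ e (ex_intro _ p hs)) p
           (Pstar_of_Sstar e p c hs)).
Qed.

End ControllerProjection.

Theorem theorem1 (E P C : Type)
  (updE : E -> E) (updP : P -> E -> C -> P) (updC : C -> P -> C)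
  (Ktilde : E -> P -> Prop) (Sstar : E * P * C -> Prop)
  (* S* is contained in K = {(e,p,c) | (e,p) in Ktilde} *)
  (HsubK : forall e p c, Sstar (e, p, c) -> Ktilde e p)
  (* forward invariance *)
  (Hinv : forall s, Sstar s -> Sstar (updS updE updP updC s))
  (* attracting *)
  (Hattr : forall s, exists n, forall t, n <= t -> Sstar (iter (updS updE updP updC) t s))
  (* autonomous controller on C* *)
  (g : {c : C | Cstar Sstar c} -> {c : C | Cstar Sstar c})
  (Hg : forall (c : C) (hc : Cstar Sstar c) (p : P), Pstar Sstar p ->
          updC c p = proj1_sig (g (exist _ c hc))) :
  (forall c : {c : C | Cstar Sstar c}, exists s : {s : E * P * C | Sstar s},
      proj_C Sstar s = c) /\
  (forall (s : E * P * C) (hs : Sstar s) (hs' : Sstar (updS updE updP updC s)),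
      proj_C Sstar (exist _ (updS updE updP updC s) hs') =
      g (proj_C Sstar (exist _ s hs))).
Proof.
  (* Only [Hg] is used: [HsubK], [Hinv] and [Hattr] are what make S* the
     relevant system to model, but the modelling square itself needs none of
     them (invariance is supplied pointwise by [hs']). *)
  split.
  - exact (proj_C_surjective E P C Sstar).
  - exact (proj_C_updS E P C updE updP updC Sstar g Hg).
Qed.
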